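(* Let $r$ be an even integer and $s$ any integer. Then $$\sum_{k=1}^\infty\frac{L_{2rk+s}}{L_r^{2k}(2k-1)(2k)(2k+1)}=\frac14F_s\sqrt5\ln\!\Big(\frac{\beta^rL_r+1}{\alpha^rL_r+1}\Big)+\frac14L_s\ln\!\Big(\frac{2L_r^2+1}{L_r^4}\Big)-\frac{L_s}{2}$$ $$+\frac18L_r^2F_s\sqrt5\ln\!\Big(\frac{L_r+\alpha^r}{L_r+\beta^r}\alpha^{2r}\Big)+\frac18L_r^2L_s\ln(2L_r^2+1)$$ $$-\frac{L_r^2-1}{8L_r}F_{r+s}\sqrt5\ln\!\Big(\frac{L_r+\alpha^r}{L_r+\beta^r}\alpha^{2r}\Big)-\frac{L_r^2-1}{8L_r}L_{r+s}\ln(2L_r^2+1),$$ and $$\sum_{k=1}^\infty\frac{F_{2rk+s}}{L_r^{2k}(2k-1)(2k)(2k+1)}=\frac14\frac{L_s}{\sqrt5}\ln\!\Big(\frac{\beta^rL_r+1}{\alpha^rL_r+1}\Big)+\frac14F_s\ln\!\Big(\frac{2L_r^2+1}{L_r^4}\Big)-\frac{F_s}{2}$$ $$+\frac18L_r^2\frac{L_s}{\sqrt5}\ln\!\Big(\frac{L_r+\alpha^r}{L_r+\beta^r}\alpha^{2r}\Big)+\frac18L_r^2F_s\ln(2L_r^2+1)$$ $$-\frac{L_r^2-1}{8L_r}\frac{L_{r+s}}{\sqrt5}\ln\!\Big(\frac{L_r+\alpha^r}{L_r+\beta^r}\alpha^{2r}\Big)-\frac{L_r^2-1}{8L_r}F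_{r+s}\ln(2L_r^2+1).$$
   Context: $F_n$ and $L_n$ are the Fibonacci and Lucas numbers for $n\in\mathbb Z$: $F_n=(\alpha^n-\beta^n)/(\alpha-\beta)$, $L_n=\alpha^n+\beta^n$, where $\alpha=(1+\sqrt5)/2$, $\beta=(1-\sqrt5)/2$. *)

From Stdlib Require Import Reals ZArith.
Open Scope R_scope.

Definition alpha : R := (1 + sqrt 5) / 2.
Definition beta  : R := (1 - sqrt 5) / 2.

Definition Fib (n : Z) : R := (powerRZ alpha n - powerRZ beta n) / (alpha - beta).
Definition Luc (n : Z) : R := powerRZ alpha n + powerRZ beta n.

From Stdlib Require Import Reals ZArith Lra Lia.
From Coquelicot Require Import Coquelicot.
Open Scope R_scope.

(* Put a = α^r, b = β^r and L = a + b = L_r; as r is even, a, b > 0 and ab = 1.  By Binet,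
   L_{2rk+s} and F_{2rk+s} are of the form p a^(2k) + q b^(2k), so both sums equal
   p G(a/L) + q G(b/L) with G(x) = Σ_{k≥1} x^(2k) / ((2k-1) 2k (2k+1)).  The partial fractions
   1/((2k-1)2k(2k+1)) = 1/(2(2k-1)) - 1/(2k) + 1/(2(2k+1)) express G through artanh x and
   ln (1 - x^2), both read off the series of -ln (1 - x).  At x = a/L and x = b/L every logarithm
   splits into ln a, ln L, ln (L+a), ln (L+b), since 1 - a/L = b/L, ln b = - ln a and
   (L+a)(L+b) = 2L^2 + 1; the closed forms of the theorem are these combinations. *)

Lemma is_series_congr (u v : nat -> R) (lu lv : R) :
  (forall n, u n = v n) -> lu = lv -> is_series u lu -> is_series v lv.
Proof. intros Huv <-. exact (is_series_ext u v lu Huv). Qed.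

Lemma is_series_lincomb (u v : nat -> R) (lu lv c d : R) :
  is_series u lu -> is_series v lv ->
  is_series (fun n => c * u n + d * v n) (c * lu + d * lv).
Proof.
  intros Hu Hv. exact (is_series_plus _ _ _ _ (is_series_scal c _ _ Hu) (is_series_scal d _ _ Hv)).
Qed.

Lemma is_series_shift (u : nat -> R) (l : R) :
  is_series u l -> is_series (fun n => u (S n)) (l - u 0%nat).
Proof.
  intros Hu. apply is_series_incr_1.
  cbn. replace (l - u 0%nat + u 0%nat) with l by ring. exact Hu.
Qed.

Lemma is_series_even_terms (w : nat -> R) (l : R) :
  (forall k, w (2 * k + 1)%nat = 0) -> is_series w l -> is_series (fun k => w (2 * k)%nat) l.
Proof.
  intros Hodd Hw.
  assert (Hsum : forall K, sum_n (fun k => w (2 * k)%nat) K = sum_n w (2 * K)).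
  { induction K as [|K IH]; [now rewrite !sum_O|].
    rewrite sum_Sn, IH.
    replace (2 * S K)%nat with (S (S (2 * K))) by lia.
    rewrite 2!sum_Sn. replace (S (2 * K)) with (2 * K + 1)%nat by lia.
    rewrite Hodd. f_equal. symmetry. apply Rplus_0_r. }
  unfold is_series. apply (filterlim_ext (fun K => sum_n w (2 * K))).
  { intros K. symmetry. apply Hsum. }
  apply (filterlim_comp _ _ _ _ (sum_n w) eventually eventually); [|exact Hw].
  apply eventually_subseq. intros; lia.
Qed.

(* [/ 0 = 0] in Stdlib, so the constant term vanishes and [PSeries log_coef x] is the series of
   [- ln (1 - x)]. *)
Definition log_coef (n : nat) : R := / INR n.

Lemma log_coef_0 : log_coef 0 = 0.
Proof. exact Rinv_0. Qed.

Lemma CV_radius_const_1 : CV_radius (fun _ : nat => 1) = 1.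
Proof.
  rewrite (CV_radius_finite_DAlembert _ 1); [now rewrite Rinv_1 | intros; lra | lra |].
  apply is_lim_seq_ext with (fun _ => 1); [|apply is_lim_seq_const].
  intros n. now rewrite Rdiv_1_r, Rabs_R1.
Qed.

Lemma PS_derive_log_coef (n : nat) : PS_derive log_coef n = 1.
Proof. unfold PS_derive, log_coef. field. apply not_0_INR. lia. Qed.

Lemma CV_radius_log_coef : CV_radius log_coef = 1.
Proof.
  rewrite <- CV_radius_derive, <- CV_radius_const_1.
  apply CV_radius_ext, PS_derive_log_coef.
Qed.

Lemma PSeries_const_1 (t : R) : Rabs t < 1 -> PSeries (fun _ => 1) t = / (1 - t).
Proof.
  intros Ht. apply is_series_unique, is_series_ext with (fun n => t ^ n).
  - intros n. cbn. ring.
  - now apply is_series_geom.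
Qed.

Lemma PSeries_log_coef (x : R) : Rabs x < 1 -> PSeries log_coef x = - ln (1 - x).
Proof.
  intros Hx.
  set (f t := plus (PSeries log_coef t) (ln (1 - t))).
  assert (Hf' : forall t, -1 < t < 1 -> is_derive f t 0).
  { intros t Ht.
    assert (Hd : is_derive f t (plus (/ (1 - t)) (- / (1 - t)))).
    { apply (is_derive_plus (PSeries log_coef) (fun u => ln (1 - u))).
      - rewrite <- PSeries_const_1 by (apply Rabs_def1; lra).
        rewrite <- (PSeries_ext _ _ _ PS_derive_log_coef).
        apply is_derive_PSeries. rewrite CV_radius_log_coef. cbn. apply Rabs_def1; lra.
      - auto_derive; [lra|field; lra]. }
    replace (plus (/ (1 - t)) (- / (1 - t))) with 0 in Hd by (cbn; ring).
    exact Hd. }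
  assert (Hconst : f x = f 0).
  { apply Rabs_def2 in Hx.
    destruct (Rtotal_order x 0) as [Hlt|[->|Hgt]]; [|reflexivity|symmetry];
      apply eq_is_derive; try lra; intros t Ht; apply Hf'; lra. }
  unfold f in Hconst. rewrite PSeries_0, log_coef_0, Rminus_0_r, ln_1 in Hconst.
  cbn in Hconst. lra.
Qed.

Lemma is_series_log (x : R) : Rabs x < 1 ->
  is_series (fun n => x ^ S n / INR (S n)) (- ln (1 - x)).
Proof.
  intros Hx.
  apply (is_series_congr (fun n => log_coef (S n) * x ^ S n) _
           (- ln (1 - x) - log_coef 0 * x ^ 0)).
  - intros n. unfold log_coef, Rdiv. ring.
  - rewrite log_coef_0. ring.
  - apply (is_series_shift (fun n => log_coef n * x ^ n)), is_pseries_R.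
    rewrite <- PSeries_log_coef by exact Hx.
    apply PSeries_correct, CV_radius_inside. rewrite CV_radius_log_coef. exact Hx.
Qed.

Lemma pow_opp_even (x : R) (k : nat) : (- x) ^ (2 * k) = x ^ (2 * k).
Proof. rewrite !pow_mult. f_equal. ring. Qed.

Lemma pow_opp_odd (x : R) (k : nat) : (- x) ^ (2 * k + 1) = - x ^ (2 * k + 1).
Proof. rewrite !pow_add, pow_opp_even. ring. Qed.

Definition artanh (x : R) : R := (ln (1 + x) - ln (1 - x)) / 2.

Lemma is_series_artanh (x : R) : Rabs x < 1 ->
  is_series (fun k => x ^ (2 * k + 1) / INR (2 * k + 1)) (artanh x).
Proof.
  intros Hx.
  assert (Hx' : Rabs (- x) < 1) by now rewrite Rabs_Ropp.
  pose proof (is_series_lincomb _ _ _ _ (1/2) (-1/2) (is_series_log x Hx) (is_series_log _ Hx'))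
    as Hw.
  apply is_series_even_terms in Hw.
  - eapply is_series_congr; [| |exact Hw].
    + intros k. cbv beta. replace (S (2 * k)) with (2 * k + 1)%nat by lia.
      rewrite pow_opp_odd. field. apply not_0_INR. lia.
    + unfold artanh. replace (1 - - x) with (1 + x) by ring. field.
  - intros k. replace (S (2 * k + 1)) with (2 * S k)%nat by lia.
    rewrite pow_opp_even. field. apply not_0_INR. lia.
Qed.

Lemma is_series_log_one_sub_sq (x : R) : Rabs x < 1 ->
  is_series (fun k => x ^ (2 * k + 2) / INR (2 * k + 2)) (- ln (1 - x ^ 2) / 2).
Proof.
  intros Hx.
  assert (Hx2 : Rabs (x ^ 2) < 1).
  { rewrite <- RPow_abs. pose proof (Rabs_pos x). nra. }
  eapply is_series_congr; [| |exact (is_series_scal_r (1/2) _ _ (is_series_log _ Hx2))].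
  - intros k. cbv beta. replace (2 * k + 2)%nat with (2 * S k)%nat by lia.
    rewrite pow_mult, mult_INR. simpl (INR 2). field. apply not_0_INR. lia.
  - field.
Qed.

Definition triple_gf (x : R) : R :=
  x / 2 * artanh x + ln (1 - x ^ 2) / 2 + (artanh x - x) / (2 * x).

Lemma is_series_triple_gf (x : R) : Rabs x < 1 -> x <> 0 ->
  is_series
    (fun k => x ^ (2 * S k) / ((2 * INR (S k) - 1) * (2 * INR (S k)) * (2 * INR (S k) + 1)))
    (triple_gf x).
Proof.
  intros Hx Hx0.
  pose proof (is_series_artanh x Hx) as Hodd.
  pose proof (is_series_lincomb _ _ _ _ (x / 2) (-1) Hodd (is_series_log_one_sub_sq x Hx))
    as Hw.
  pose proof (is_series_lincomb _ _ _ _ 1 (/ (2 * x)) Hw (is_series_shift _ _ Hodd)) as Hw'.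
  eapply is_series_congr; [| |exact Hw'].
  - intros k. cbv beta.
    replace (2 * S k + 1)%nat with (2 * k + 3)%nat by lia.
    replace (2 * S k)%nat with (2 * k + 2)%nat by lia.
    rewrite !plus_INR, !mult_INR, !S_INR, !pow_add. simpl INR.
    assert (0 <= INR k) by apply pos_INR.
    field. repeat split; lra.
  - unfold triple_gf. simpl. field. exact Hx0.
Qed.

Lemma ln_div (x y : R) : 0 < x -> 0 < y -> ln (x / y) = ln x - ln y.
Proof.
  intros Hx Hy. unfold Rdiv. rewrite ln_mult, ln_Rinv; [ring | | |]; auto.
  now apply Rinv_0_lt_compat.
Qed.

Lemma artanh_div_sum (u v L : R) : 0 < u -> 0 < v -> L = u + v ->
  artanh (u / L) = (ln (L + u) - ln v) / 2.
Proof.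
  intros Hu Hv HL. unfold artanh.
  replace (1 + u / L) with ((L + u) / L) by (field; lra).
  replace (1 - u / L) with (v / L) by (subst; field; lra).
  rewrite !ln_div by lra. field.
Qed.

Lemma ln_one_sub_sq_div_sum (u v L : R) : 0 < u -> 0 < v -> L = u + v ->
  ln (1 - (u / L) ^ 2) = ln v + ln (L + u) - 2 * ln L.
Proof.
  intros Hu Hv HL.
  replace (1 - (u / L) ^ 2) with (v * (L + u) / L ^ 2) by (subst; field; lra).
  rewrite ln_div, ln_mult, ln_pow by (try apply pow_lt; nra). simpl INR. ring.
Qed.

Lemma div_sum_in_unit (u v L : R) : 0 < u -> 0 < v -> L = u + v -> 0 < u / L < 1.
Proof.
  intros Hu Hv HL. assert (0 < v / L) by (apply Rdiv_lt_0_compat; lra).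
  split; [apply Rdiv_lt_0_compat; lra|].
  replace (u / L) with (1 - v / L) by (subst; field; lra). lra.
Qed.

(* With a = α^r, b = β^r this is the right-hand side of the Lucas identity for p = α^s, q = β^s,
   and of the Fibonacci identity for p = α^s/√5, q = -β^s/√5. *)
Definition log_closed_form (a b p q : R) : R :=
  let L := a + b in
  1/4 * (p - q) * ln ((b * L + 1) / (a * L + 1)) + 1/4 * (p + q) * ln ((2 * L ^ 2 + 1) / L ^ 4)
  - (p + q) / 2
  + 1/8 * L ^ 2 * (p - q) * ln ((L + a) / (L + b) * a ^ 2)
  + 1/8 * L ^ 2 * (p + q) * ln (2 * L ^ 2 + 1)
  - (L ^ 2 - 1) / (8 * L) * (a * p - b * q) * ln ((L + a) / (L + b) * a ^ 2)
  - (L ^ 2 - 1) / (8 * L) * (a * p + b * q) * ln (2 * L ^ 2 + 1).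

Section ReciprocalPair.

Variables a b : R.
Hypotheses (ha : 0 < a) (hab : a * b = 1).

Let L := a + b.

Lemma recip_pos : 0 < b.
Proof. nra. Qed.

Let hb : 0 < b := recip_pos.

Lemma ln_recip : ln b = - ln a.
Proof. replace b with (/ a) by (field_simplify_eq; lra). now apply ln_Rinv. Qed.

Lemma ln_two_sq_add_one : ln (2 * L ^ 2 + 1) = ln (L + a) + ln (L + b).
Proof.
  replace (2 * L ^ 2 + 1) with ((L + a) * (L + b)) by (unfold L; nra).
  apply ln_mult; unfold L; lra.
Qed.

Lemma ln_recip_ratio :
  ln ((b * L + 1) / (a * L + 1)) = ln (L + a) - ln (L + b) - 2 * ln a.
Proof.
  replace (b * L + 1) with (b * (L + a)) by (unfold L; nra).
  replace (a * L + 1) with (a * (L + b)) by (unfold L; nra).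
  rewrite ln_div, !ln_mult, ln_recip; unfold L; nra.
Qed.

Lemma ln_ratio_mul_sq :
  ln ((L + a) / (L + b) * a ^ 2) = ln (L + a) - ln (L + b) + 2 * ln a.
Proof.
  rewrite ln_mult, ln_div, ln_pow; unfold L; try apply pow_lt; try apply Rdiv_lt_0_compat; try lra.
  simpl INR. ring.
Qed.

Lemma ln_two_sq_add_one_div :
  ln ((2 * L ^ 2 + 1) / L ^ 4) = ln (L + a) + ln (L + b) - 4 * ln L.
Proof.
  rewrite ln_div, ln_two_sq_add_one, ln_pow; unfold L; try apply pow_lt; try nra.
  simpl INR. ring.
Qed.

Lemma triple_gf_pair (p q : R) :
  p * triple_gf (a / L) + q * triple_gf (b / L) = log_closed_form a b p q.
Proof.
  unfold log_closed_form, triple_gf. fold L.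
  rewrite ln_recip_ratio, ln_two_sq_add_one_div, ln_ratio_mul_sq, ln_two_sq_add_one.
  rewrite (artanh_div_sum a b L), (artanh_div_sum b a L), (ln_one_sub_sq_div_sum a b L),
    (ln_one_sub_sq_div_sum b a L), ln_recip by (unfold L; lra).
  unfold L. replace b with (/ a) by (field_simplify_eq; lra).
  field. repeat split; nra.
Qed.

Lemma is_series_log_closed_form (p q : R) :
  is_series
    (fun k => (p * a ^ (2 * S k) + q * b ^ (2 * S k)) /
       (L ^ (2 * S k) * (2 * INR (S k) - 1) * (2 * INR (S k)) * (2 * INR (S k) + 1)))
    (log_closed_form a b p q).
Proof.
  assert (HL : 0 < L) by (unfold L; lra).
  assert (Hunit : forall x, 0 < x < 1 -> Rabs x < 1) by (intros x Hx; rewrite Rabs_pos_eq; lra).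
  pose proof (div_sum_in_unit a b L ha hb eq_refl) as Ha.
  pose proof (div_sum_in_unit b a L hb ha ltac:(unfold L; ring)) as Hb.
  pose proof (is_series_triple_gf (a / L) (Hunit _ Ha) ltac:(lra)) as Hsa.
  pose proof (is_series_triple_gf (b / L) (Hunit _ Hb) ltac:(lra)) as Hsb.
  rewrite <- triple_gf_pair.
  eapply is_series_congr; [| |exact (is_series_lincomb _ _ _ _ p q Hsa Hsb)]; [|reflexivity].
  intros k. cbv beta. unfold Rdiv. rewrite !Rpow_mult_distr, !pow_inv.
  assert (0 <= INR k) by apply pos_INR. rewrite S_INR.
  assert (L ^ (2 * S k) <> 0) by (apply pow_nonzero; lra).
  field. repeat split; lra.
Qed.

End ReciprocalPair.

Lemma alpha_pos : 0 < alpha.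
Proof. unfold alpha. pose proof (sqrt_pos 5). lra. Qed.

Lemma sqrt5_pos : 0 < sqrt 5.
Proof. apply sqrt_lt_R0. lra. Qed.

Lemma alpha_sub_beta : alpha - beta = sqrt 5.
Proof. unfold alpha, beta. field. Qed.

Lemma alpha_mul_beta : alpha * beta = -1.
Proof. unfold alpha, beta. pose proof (sqrt_sqrt 5 ltac:(lra)). nra. Qed.

Lemma beta_neq0 : beta <> 0.
Proof. intros H. pose proof alpha_mul_beta. rewrite H in *. lra. Qed.

Lemma powerRZ_mul_nat (x : R) (z : Z) (n : nat) : x <> 0 ->
  powerRZ x (z * Z.of_nat n) = powerRZ x z ^ n.
Proof.
  intros Hx. induction n as [|n IH].
  - now rewrite Z.mul_0_r.
  - rewrite Nat2Z.inj_succ, Z.mul_succ_r, powerRZ_add, IH by exact Hx. cbn. ring.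
Qed.

Lemma powerRZ_double (x : R) (m : Z) : x <> 0 -> powerRZ x (2 * m) = powerRZ (x * x) m.
Proof. intros Hx. rewrite powerRZ_mult, <- powerRZ_add by exact Hx. f_equal. lia. Qed.

Lemma powerRZ_even_pos (x : R) (z : Z) : x <> 0 -> Z.Even z -> 0 < powerRZ x z.
Proof.
  intros Hx [m ->]. rewrite powerRZ_double by exact Hx.
  apply powerRZ_lt. nra.
Qed.

Lemma powerRZ_alpha_mul_beta_even (z : Z) : Z.Even z -> powerRZ alpha z * powerRZ beta z = 1.
Proof.
  intros [m ->]. rewrite <- powerRZ_mult, powerRZ_double, alpha_mul_beta.
  - replace (-1 * -1) with 1 by ring. apply powerRZ_R1.
  - pose proof alpha_mul_beta. nra.
Qed.

Lemma powerRZ_arith (x : R) (r s : Z) (n : nat) : x <> 0 ->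
  powerRZ x (2 * r * Z.of_nat n + s) = powerRZ x s * powerRZ x r ^ (2 * n).
Proof.
  intros Hx. rewrite powerRZ_add, <- powerRZ_mul_nat, Rmult_comm by exact Hx.
  do 2 f_equal. lia.
Qed.

Lemma Luc_arith (r s : Z) (n : nat) :
  Luc (2 * r * Z.of_nat n + s) =
  powerRZ alpha s * powerRZ alpha r ^ (2 * n) + powerRZ beta s * powerRZ beta r ^ (2 * n).
Proof.
  pose proof alpha_pos. pose proof beta_neq0.
  unfold Luc. rewrite !powerRZ_arith by lra. reflexivity.
Qed.

Lemma Fib_arith (r s : Z) (n : nat) :
  Fib (2 * r * Z.of_nat n + s) =
  powerRZ alpha s / sqrt 5 * powerRZ alpha r ^ (2 * n)
  + - powerRZ beta s / sqrt 5 * powerRZ beta r ^ (2 * n).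
Proof.
  pose proof alpha_pos. pose proof beta_neq0. pose proof sqrt5_pos.
  unfold Fib. rewrite alpha_sub_beta, !powerRZ_arith by lra. field. lra.
Qed.

Theorem theorem12 (r s : Z) (hr : Z.Even r) :
  let Lr := Luc r in
  let A := ln ((powerRZ beta r * Lr + 1) / (powerRZ alpha r * Lr + 1)) in
  let B := ln ((2 * Lr ^ 2 + 1) / Lr ^ 4) in
  let C := ln ((Lr + powerRZ alpha r) / (Lr + powerRZ beta r) * powerRZ alpha (2 * r)) in
  let D := ln (2 * Lr ^ 2 + 1) in
  let den (k : nat) := Lr ^ (2 * k) * (2 * INR k - 1) * (2 * INR k) * (2 * INR k + 1) in
  infinite_sum
    (fun k : nat => Luc (2 * r * Z.of_nat (S k) + s) / den (S k))
    (1/4 * Fib s * sqrt 5 * A + 1/4 * Luc s * B - Luc s / 2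
     + 1/8 * Lr ^ 2 * Fib s * sqrt 5 * C + 1/8 * Lr ^ 2 * Luc s * D
     - (Lr ^ 2 - 1) / (8 * Lr) * Fib (r + s) * sqrt 5 * C
     - (Lr ^ 2 - 1) / (8 * Lr) * Luc (r + s) * D)
  /\
  infinite_sum
    (fun k : nat => Fib (2 * r * Z.of_nat (S k) + s) / den (S k))
    (1/4 * (Luc s / sqrt 5) * A + 1/4 * Fib s * B - Fib s / 2
     + 1/8 * Lr ^ 2 * (Luc s / sqrt 5) * C + 1/8 * Lr ^ 2 * Fib s * D
     - (Lr ^ 2 - 1) / (8 * Lr) * (Luc (r + s) / sqrt 5) * C
     - (Lr ^ 2 - 1) / (8 * Lr) * Fib (r + s) * D).
Proof.
  cbv zeta.
  pose proof alpha_pos. pose proof beta_neq0. pose proof sqrt5_pos.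
  pose proof (powerRZ_even_pos alpha r ltac:(lra) hr) as Ha.
  pose proof (powerRZ_alpha_mul_beta_even r hr) as Hab.
  pose proof (recip_pos _ _ Ha Hab).
  assert (Hsq : powerRZ alpha (2 * r) = powerRZ alpha r ^ 2).
  { rewrite <- powerRZ_mul_nat by lra. f_equal. lia. }
  rewrite Hsq. split; apply is_series_Reals.
  - eapply is_series_congr;
      [| |exact (is_series_log_closed_form _ _ Ha Hab (powerRZ alpha s) (powerRZ beta s))].
    + intros k. now rewrite Luc_arith.
    + unfold log_closed_form, Fib, Luc. rewrite alpha_sub_beta, !powerRZ_add by lra.
      field. lra.
  - eapply is_series_congr;
      [| |exact (is_series_log_closed_form _ _ Ha Hab
                   (powerRZ alpha s / sqrt 5) (- powerRZ beta s / sqrt 5))].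
    + intros k. now rewrite Fib_arith.
    + unfold log_closed_form, Fib, Luc. rewrite alpha_sub_beta, !powerRZ_add by lra.
      field. lra.
Qed.
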